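(* Let $G$ be a finite, simple, connected $S_4$ graph with $n$ nodes. Then any self-directed learning algorithm for the convex bipartitions of $G$ makes $\Omega\left(\omega(G)/\ln n\right)$ mistakes in the worst case, i.e., $M_{\mathrm{sd}}(\mathcal{H})=\Omega(\omega(G)/\ln n)$ where $\mathcal{H}$ is the set of convex bipartitions of $G$.
   Context: Self-directed learning: an unknown labeling $y\in\mathcal{H}$ is fixed; for $t=1,\dots,n$ the learner, knowing $G$ and $\mathcal{H}$ but not $y$, selects a not-yet-selected node, predicts its label, then observes the true label; $M_{\mathrm{sd}}(\mathcal{H})$ is the minimum over algorithms of the worst-case number of mistakes over $y\in\mathcal{H}$. The interval $I(u,v)$ is the set of nodes on at least one shortest $u$–$v$ path; $C\subseteq V$ is convex if $I(a,b)\subseteq C$ for all $a,b\in C$; $\mathrm{conv}(A)$ is the smallest convex set containing $A$. A halfspace (convex bipartition) is a set $H\subseteq V$ with $H$ and $V\setminus H$ both convex (equivalently, a labeling $V\to\{1,2\}$ with both classes convex). $G$ is $S_4$ if for all $A,B\subseteq V$ with $\mathrm{conv}(A)\cap\mathrm{conv}(B)=\emptyset$ there is a halfspace $H$ with $A\subseteq H$ and $B\subseteq V\setminus H$. $\omega(G)$ is the clique number of $G$. *)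

From mathcomp Require Import all_boot.
From Stdlib Require Import Reals.

Set Implicit Arguments.
Unset Strict Implicit.
Unset Printing Implicit Defensive.

Section Graphs.
Variables (T : finType) (e : rel T).

Definition in_interval (u v w : T) : Prop :=
  exists p : seq T,
    [/\ path e u p, last u p = v, w \in u :: p &
        forall q : seq T, path e u q -> last u q = v -> size p <= size q].

Definition convex (C : {set T}) : Prop :=
  forall a b w, a \in C -> b \in C -> in_interval a b w -> w \in C.

Definition in_conv (A : {set T}) (x : T) : Prop :=
  forall C : {set T}, convex C -> A \subset C -> x \in C.

Definition halfspace (H : {set T}) : Prop := convex H /\ convex (~: H).

Definition S4 : Prop :=
  forall A B : {set T}, (forall x, ~ (in_conv A x /\ in_conv B x)) ->
    exists H : {set T}, halfspace H /\ A \subset H /\ B \subset ~: H.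

(* Labelings V -> {1,2} encoded as bool; a convex bipartition labeling. *)
Definition halfspace_labeling (y : T -> bool) : Prop :=
  convex [set x | y x] /\ convex [set x | ~~ y x].

Definition clique (K : {set T}) : bool :=
  [forall x in K, forall z in K, (x != z) ==> e x z].

Definition clique_number : nat := \max_(K : {set T} | clique K) #|K|.

(* A history is the sequence of (selected node,
   true label) pairs revealed so far; a (deterministic) algorithm maps the
   history to the next selected node and its predicted label. *)
Definition sd_algorithm := seq (T * bool) -> T * bool.

Definition valid_sd (Alg : sd_algorithm) : Prop :=
  forall h : seq (T * bool), uniq (map fst h) -> size h < #|T| ->
    (Alg h).1 \notin map fst h.

Fixpoint sd_run (Alg : sd_algorithm) (y : T -> bool) (k : nat)
    (h : seq (T * bool)) : nat :=
  match k with
  | 0 => 0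
  | k'.+1 =>
      let v := (Alg h).1 in
      let p := (Alg h).2 in
      (p != y v) + sd_run Alg y k' (rcons h (v, y v))
  end.

Definition sd_mistakes (Alg : sd_algorithm) (y : T -> bool) : nat :=
  sd_run Alg y #|T| [::].

End Graphs.

From mathcomp Require Import all_boot.
From Stdlib Require Import Reals Lra ClassicalEpsilon.

Set Implicit Arguments.
Unset Strict Implicit.
Unset Printing Implicit Defensive.

(* Every subset A of a maximum clique K is convex, and so is K \ A; by S4 some
   halfspace cuts exactly A out of K, which yields 2^omega pairwise distinct
   targets.  Against a fixed learner, a target is determined by the set of
   nodes on which the learner errs: replaying the run, the label of each
   queried node is the prediction, flipped exactly at mistakes.  With at most
   M mistakes there are at most (n+1)^M such sets, so
   2^omega <= (n+1)^M <= n^(2M), i.e. M >= omega ln 2 / (2 ln n). *)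

Definition small_set_code (T : finType) (m : nat) (S : {set T}) :
    {ffun 'I_m -> option T} :=
  [ffun i : 'I_m => nth None (map Some (enum S)) i].

Lemma small_set_codeP (T : finType) (m : nat) (S : {set T}) x : #|S| <= m ->
  (x \in S) = [exists i, small_set_code m S i == Some x].
Proof.
move=> small; apply/idP/existsP => [xS | [i]].
  have idx : index x (enum S) < m.
    by apply: leq_trans small; rewrite cardE index_mem mem_enum.
  exists (Ordinal idx).
  by rewrite ffunE (nth_map x) ?index_mem ?mem_enum // nth_index ?mem_enum.
rewrite ffunE; case: (ltnP i (size (enum S))) => [lt | ge].
  by rewrite (nth_map x) // => /eqP [<-]; rewrite -mem_enum mem_nth.
by rewrite nth_default ?size_map.
Qed.

Lemma card_small_sets (T : finType) (m : nat) :
  #|[set S : {set T} | #|S| <= m]| <= expn #|T|.+1 m.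
Proof.
have code_inj :
    {in [set S : {set T} | #|S| <= m] &, injective (small_set_code m)}.
  move=> S1 S2; rewrite !inE => small1 small2 same_code; apply/setP => x.
  by rewrite (small_set_codeP _ small1) (small_set_codeP _ small2) same_code.
apply: leq_trans (leq_card_in _ _ code_inj) _.
by rewrite card_ffun card_option card_ord.
Qed.

Section SelfDirectedLearning.
Variables (T : finType) (Alg : sd_algorithm T).
Hypothesis Alg_valid : valid_sd Alg.

Definition sd_step (y : T -> bool) (h : seq (T * bool)) : seq (T * bool) :=
  rcons h ((Alg h).1, y (Alg h).1).

Fixpoint sd_history (y : T -> bool) (k : nat) (h : seq (T * bool)) :=
  if k is k'.+1 then sd_history y k' (sd_step y h) else h.

Fixpoint mistake_set (y : T -> bool) (k : nat) (h : seq (T * bool)) : {set T} :=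
  if k is k'.+1 then
    (if (Alg h).2 != y (Alg h).1 then [set (Alg h).1] else set0)
      :|: mistake_set y k' (sd_step y h)
  else set0.

Definition extendable (k : nat) (h : seq (T * bool)) : bool :=
  uniq (map fst h) && (size h + k <= #|T|).

Lemma extendable_query k h : extendable k.+1 h -> (Alg h).1 \notin map fst h.
Proof.
case/andP=> uh sz; apply: Alg_valid => //.
by apply: leq_trans sz; rewrite addnS ltnS leq_addr.
Qed.

Lemma extendable_step y k h : extendable k.+1 h -> extendable k (sd_step y h).
Proof.
move=> ext; have fresh := extendable_query ext; case/andP: ext => uh sz.
by rewrite /extendable /sd_step map_rcons rcons_uniq fresh uh size_rcons addSnnS.
Qed.

Lemma mistake_set_unqueried y k h v :
  extendable k h -> v \in mistake_set y k h -> v \notin map fst h.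
Proof.
elim: k h => [|k IH] h ext /=; first by rewrite inE.
rewrite inE => /orP[|/(IH _ (extendable_step y ext))].
  by case: ifP => _; rewrite inE // => /eqP ->; exact: extendable_query ext.
by rewrite /sd_step map_rcons mem_rcons inE negb_or => /andP[].
Qed.

Lemma mistake_set_step y k h (v := (Alg h).1) :
  extendable k.+1 h ->
  (v \in mistake_set y k.+1 h) = ((Alg h).2 != y v) /\
  mistake_set y k (sd_step y h) = mistake_set y k.+1 h :\ v.
Proof.
move=> ext.
have later : v \notin mistake_set y k (sd_step y h).
  apply/negP => /(mistake_set_unqueried (extendable_step y ext)).
  by rewrite /sd_step map_rcons mem_rcons inE eqxx.
rewrite /= inE (negbTE later) orbF; split; first by case: ifP; rewrite ?inE ?eqxx.
rewrite setDUl.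
have -> : (if (Alg h).2 != y v then [set v] else set0) :\ v = set0.
  by case: ifP; rewrite ?setDv ?set0D.
by rewrite set0U; apply/esym/setDidPl; rewrite disjoint_sym disjoints1.
Qed.

Lemma card_mistake_set y k h :
  extendable k h -> #|mistake_set y k h| = sd_run Alg y k h.
Proof.
elim: k h => [|k IH] h ext; first by rewrite cards0.
have [mis_v mis_next] := mistake_set_step y ext.
by rewrite (cardsD1 (Alg h).1) mis_v -mis_next IH //; apply: extendable_step.
Qed.

Lemma sd_history_mistake_set y1 y2 k h : extendable k h ->
  mistake_set y1 k h = mistake_set y2 k h -> sd_history y1 k h = sd_history y2 k h.
Proof.
elim: k h => [|k IH] h ext same_mis //.
have [mis1_v mis1_next] := mistake_set_step y1 ext.
have [mis2_v mis2_next] := mistake_set_step y2 ext.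
have same_label : y1 (Alg h).1 = y2 (Alg h).1.
  move: mis1_v mis2_v; rewrite same_mis => ->.
  by case: (Alg h).2 (y1 _) (y2 _) => [] [] [].
have same_step : sd_step y1 h = sd_step y2 h by rewrite /sd_step same_label.
rewrite /= same_step IH //; first exact: extendable_step.
by rewrite mis2_next -same_step mis1_next same_mis.
Qed.

Lemma size_sd_history y k h : size (sd_history y k h) = size h + k.
Proof. by elim: k h => [|k IH] h /=; rewrite ?addn0 // IH size_rcons addSnnS. Qed.

Lemma sd_history_extendable y k h :
  extendable k h -> extendable 0 (sd_history y k h).
Proof. by elim: k h => [|k IH] h //= ext; apply/IH/extendable_step. Qed.

Lemma sd_history_labels y k h : all (fun p => p.2 == y p.1) h ->
  all (fun p => p.2 == y p.1) (sd_history y k h).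
Proof. by elim: k h => [|k IH] h //= lab; apply: IH; rewrite all_rcons eqxx. Qed.

Lemma sd_history_complete y x : x \in map fst (sd_history y #|T| [::]).
Proof.
have /andP[uniq_hist _] : extendable 0 (sd_history y #|T| [::]).
  by apply: sd_history_extendable; rewrite /extendable leqnn.
have covers : size (enum T) <= size (map fst (sd_history y #|T| [::])).
  by rewrite -cardT size_map size_sd_history.
have [_ same] := uniq_min_size uniq_hist (fun z _ => mem_enum T z) covers.
by rewrite same mem_enum.
Qed.

Lemma mistake_set_inj y1 y2 :
  mistake_set y1 #|T| [::] = mistake_set y2 #|T| [::] -> y1 =1 y2.
Proof.
have ext : extendable #|T| [::] by rewrite /extendable leqnn.
move=> /(sd_history_mistake_set ext) same_hist x.
have /allP lab1 := sd_history_labels (y := y1) #|T| (isT : all _ [::]).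
have /allP lab2 := sd_history_labels (y := y2) #|T| (isT : all _ [::]).
case/mapP: (sd_history_complete y1 x) => [[z b] zb /= ->].
move/eqP: (lab1 _ zb) => /= <-.
by rewrite same_hist in zb; move/eqP: (lab2 _ zb).
Qed.

Lemma card_mistake_set_full y : #|mistake_set y #|T| [::]| = sd_mistakes Alg y.
Proof. by rewrite card_mistake_set // /extendable leqnn. Qed.

Lemma sd_mistakes_family_bound (I : finType) (D : {set I}) (f : I -> T -> bool) :
  {in D &, forall i j, f i =1 f j -> i = j} -> D != set0 ->
  exists2 i, i \in D & #|D| <= expn #|T|.+1 (sd_mistakes Alg (f i)).
Proof.
move=> f_inj /set0Pn[i0 Di0].
case: (arg_maxnP (fun i => sd_mistakes Alg (f i)) Di0) => i Di i_max.
exists i => //.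
pose g j := mistake_set (f j) #|T| [::].
have g_inj : {in D &, injective g}.
  by move=> j1 j2 Dj1 Dj2 /mistake_set_inj; apply: f_inj.
rewrite -(card_in_imset g_inj); apply: leq_trans (card_small_sets _ _).
apply/subset_leq_card/subsetP => _ /imsetP[j Dj ->].
by rewrite inE card_mistake_set_full; apply: i_max.
Qed.

End SelfDirectedLearning.

Section ConvexBipartitions.
Variables (T : finType) (e : rel T).

Lemma clique_subset_convex (K A : {set T}) :
  clique e K -> A \subset K -> convex e A.
Proof.
move=> cK sAK a b w aA bA [p [pth lst win shortest]].
case: (eqVneq a b) => [ab | nab].
  move: (shortest [::] isT ab); rewrite leqn0 => /nilP p_nil.
  by move: win; rewrite p_nil inE => /eqP ->.
have eab : e a b.
  by move/forall_inP: cK => /(_ a (subsetP sAK _ aA)) /forall_inP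
    /(_ b (subsetP sAK _ bA)) /implyP /(_ nab).
move: (shortest [:: b]); rewrite /= eab => /(_ isT erefl).
case: p pth lst win {shortest} => [|c [|d q]] //= _.
  by move=> ab; rewrite ab eqxx in nab.
by move=> ->; rewrite !inE => /orP[] /eqP ->.
Qed.

Lemma convex_in_conv (A : {set T}) x : convex e A -> in_conv e A x -> x \in A.
Proof. by move=> cA /(_ A cA (subxx _)). Qed.

Lemma S4_clique_cut (K A : {set T}) : S4 e -> clique e K -> A \subset K ->
  exists H, halfspace e H /\ H :&: K = A.
Proof.
move=> s4 cK sAK.
have cA := clique_subset_convex cK sAK.
have cB := clique_subset_convex cK (subsetDl K A).
have [H [hH [sAH sBH]]] :
    exists H, halfspace e H /\ A \subset H /\ K :\: A \subset ~: H.
  by apply: s4 => x [/(convex_in_conv cA) xA /(convex_in_conv cB)]; rewrite inE xA.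
exists H; split => //; apply/setP => x; rewrite inE.
case xK: (x \in K); rewrite ?andbF ?andbT; last first.
  by apply/esym/negbTE; apply: contraFN xK; apply: (subsetP sAK).
case xA: (x \in A); first by rewrite (subsetP sAH).
have : x \in K :\: A by rewrite inE xA xK.
by move/(subsetP sBH); rewrite inE => /negbTE.
Qed.

Lemma halfspace_labeling_mem (H : {set T}) :
  halfspace e H -> halfspace_labeling e (fun x => x \in H).
Proof.
case=> cH cHc; split => //.
by have -> : [set x | x \in H] = H by apply/setP => x; rewrite inE.
Qed.

Lemma S4_clique_labelings (K : {set T}) : S4 e -> clique e K ->
  exists f : {set T} -> T -> bool, forall A : {set T}, A \subset K ->
    halfspace_labeling e (f A) /\ [set x in K | f A x] = A.
Proof.
move=> s4 cK.
have cut (A : {set T}) : exists H, A \subset K -> halfspace e H /\ H :&: K = A.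
  have [sAK | _] := boolP (A \subset K); last by exists set0.
  by have [H cutH] := S4_clique_cut s4 cK sAK; exists H.
have [hs hsP] := choice _ cut.
exists (fun A x => x \in hs A) => A sAK; have [hH cutA] := hsP A sAK.
split; first exact: halfspace_labeling_mem hH.
by rewrite -[RHS]cutA; apply/setP => x; rewrite !inE andbC.
Qed.

Lemma exists_maximum_clique : exists2 K, clique e K & clique_number e = #|K|.
Proof.
have nonempty : 0 < #|[pred K : {set T} | clique e K]|.
  by apply/card_gt0P; exists set0; apply/forall_inP => x; rewrite inE.
by have [K] := eq_bigmax_cond (fun K : {set T} => #|K|) nonempty; exists K.
Qed.

End ConvexBipartitions.

Lemma INR_expn (a b : nat) : INR (expn a b) = (INR a ^ b)%R.
Proof. by elim: b => [|b IH] //=; rewrite expnS -multE mult_INR IH. Qed.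

Lemma ln_le_ln (x y : R) : (0 < x)%R -> (x <= y)%R -> (ln x <= ln y)%R.
Proof.
move=> x_pos x_le_y; apply: Rnot_lt_le => lt_ln.
by have := ln_lt_inv _ _ (Rlt_le_trans _ _ _ x_pos x_le_y) x_pos lt_ln; lra.
Qed.

Lemma ln_bound_of_expn_le (w m n : nat) : 2 <= n -> expn 2 w <= expn n.+1 m ->
  (ln 2 / 2 * INR w / ln (INR n) <= INR m)%R.
Proof.
move=> n_ge2 pow_le.
have n_ge2R : (2 <= INR n)%R by apply: (le_INR 2); apply/leP.
have ln_n_pos : (0 < ln (INR n))%R by rewrite -ln_1; apply: ln_increasing; lra.
have ln_pow_le : (INR w * ln 2 <= INR m * ln (INR n.+1))%R.
  rewrite -!ln_pow; try (rewrite S_INR; lra); try lra.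
  apply: ln_le_ln; first by apply: pow_lt; lra.
  have -> : 2%R = INR 2 by rewrite /=; lra.
  by rewrite -!INR_expn; apply/le_INR/leP.
have ln_succ_le : (ln (INR n.+1) <= 2 * ln (INR n))%R.
  rewrite S_INR -Rplus_diag -ln_mult; try lra.
  by apply: ln_le_ln; nra.
have m_ge0 := pos_INR m.
apply: (Rmult_le_reg_r (ln (INR n))) => //.
have -> : (ln 2 / 2 * INR w / ln (INR n) * ln (INR n) = ln 2 / 2 * INR w)%R.
  by field; lra.
nra.
Qed.

Theorem mainTheorem10 :
  exists c : R, (0 < c)%R /\ exists N : nat,
    forall (T : finType) (e : rel T),
      symmetric e -> irreflexive e -> (forall x y : T, connect e x y) ->
      S4 e -> N <= #|T| ->
      forall Alg : sd_algorithm T, valid_sd Alg ->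
        exists y : T -> bool, halfspace_labeling e y /\
          (c * INR (clique_number e) / ln (INR #|T|) <= INR (sd_mistakes Alg y))%R.
Proof.
exists (ln 2 / 2)%R; split; first by have := ln_lt_2; lra.
exists 2 => T e _ _ _ s4 n_ge2 Alg Alg_valid.
have [K cK ->] := exists_maximum_clique e.
have [f f_cut] := S4_clique_labelings s4 cK.
have f_inj : {in powerset K &, forall A B, f A =1 f B -> A = B}.
  move=> A B; rewrite !powersetE => AK BK fAB.
  by rewrite -(f_cut A AK).2 -(f_cut B BK).2; apply/setP => x; rewrite !inE fAB.
have powerset_nonempty : powerset K != set0.
  by apply/set0Pn; exists set0; rewrite powersetE sub0set.
have [A AK bound] := sd_mistakes_family_bound Alg_valid f_inj powerset_nonempty.
exists (f A); split; first by apply: (f_cut A _).1; rewrite -powersetE.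
by apply: ln_bound_of_expn_le n_ge2 _; rewrite -card_powerset.
Qed.
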